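(* Let $(S_n)_{n\ge0}$ be defined by $S_0=3$, $S_1=1$, $S_2=3$ and $S_{n+1}=S_n+S_{n-1}+S_{n-2}$ for $n\ge 2$. Let $\alpha,\beta,\gamma$ be the roots of $x^3-x^2-x-1=0$ and $C_n=\alpha^n\beta^n+\alpha^n\gamma^n+\beta^n\gamma^n$ for $n\ge0$. Then for all $n\ge 0$, $$2S_n=C_n^2-C_{2n}.$$
   Context: $S_n$ is the generalized Lucas (generalized Tribonacci) sequence. *)

From mathcomp Require Import all_boot all_order all_algebra all_field.
From mathcomp Require Import zify.
Set Implicit Arguments. Unset Strict Implicit. Unset Printing Implicit Defensive.
Import Order.TTheory GRing.Theory Num.Theory.

(* S_triple n = (S_n, S_(n+1), S_(n+2)) *)
Fixpoint S_triple (n : nat) : nat * nat * nat :=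
  match n with
  | 0 => (3, 1, 3)
  | m.+1 => let: (x, y, z) := S_triple m in (y, z, x + y + z)
  end.

Definition S_seq (n : nat) : nat := (S_triple n).1.1.

Lemma S_seq0 : S_seq 0 = 3. Proof. by []. Qed.
Lemma S_seq1 : S_seq 1 = 1. Proof. by []. Qed.
Lemma S_seq2 : S_seq 2 = 3. Proof. by []. Qed.
Lemma S_seqS (n : nat) : S_seq n.+3 = S_seq n.+2 + S_seq n.+1 + S_seq n.
Proof.
rewrite /S_seq /=; case: (S_triple n) => [[x y] z] /=.
by lia.
Qed.

Local Open Scope ring_scope.

Definition C_seq (R : ringType) (a b c : R) (n : nat) : R :=
  a ^+ n * b ^+ n + a ^+ n * c ^+ n + b ^+ n * c ^+ n.

From mathcomp Require Import all_boot all_order all_algebra all_field.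
From mathcomp Require Import ring.
Set Implicit Arguments.
Unset Strict Implicit.
Unset Printing Implicit Defensive.

Import GRing.Theory.
Local Open Scope ring_scope.

(* Vieta's formulas for x^3 - x^2 - x - 1 give a + b + c = 1 and abc = 1, so
   the power sums p_k = a^k + b^k + c^k obey the recurrence of S with the same
   initial values (p_2 = (a + b + c)^2 - 2(ab + bc + ca) = 3), hence p_n = S_n.
   On the other hand, with x = a^n, y = b^n, z = c^n one has the identity
   (xy + xz + yz)^2 - (x^2y^2 + x^2z^2 + y^2z^2) = 2xyz(x + y + z), i.e.
   C_n^2 - C_2n = 2 (abc)^n p_n = 2 p_n. *)

Lemma eq_S_seq (R : pzSemiRingType) (u : nat -> R) :
  u 0%N = 3 -> u 1%N = 1 -> u 2%N = 3 ->
  (forall k, u k.+3 = u k.+2 + u k.+1 + u k) ->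
  forall k, u k = (S_seq k)%:R.
Proof.
move=> u0 u1 u2 uS.
suff S_window k : [/\ u k = (S_seq k)%:R, u k.+1 = (S_seq k.+1)%:R
                      & u k.+2 = (S_seq k.+2)%:R] by move=> k; case: (S_window k).
elim: k => [|k [IH0 IH1 IH2]]; first by rewrite u0 u1 u2.
by split; rewrite // uS S_seqS !natrD IH0 IH1 IH2.
Qed.

Lemma exprS_of_cube (R : pzSemiRingType) (x : R) :
  x ^+ 3 = x ^+ 2 + x + 1 -> forall k, x ^+ k.+3 = x ^+ k.+2 + x ^+ k.+1 + x ^+ k.
Proof.
move=> cube_x k.
by rewrite -addn3 exprD cube_x !mulrDr mulr1 -exprSr -exprD addn2.
Qed.

Definition power_sum3 (R : pzSemiRingType) (a b c : R) (k : nat) : R :=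
  a ^+ k + b ^+ k + c ^+ k.

Lemma C_seq_sqr_sub (R : comNzRingType) (a b c : R) (n : nat) :
  C_seq a b c n ^+ 2 - C_seq a b c (2 * n)%N =
  2 * (a * b * c) ^+ n * power_sum3 a b c n.
Proof. by rewrite /C_seq /power_sum3 mulnC !exprM !exprMn; ring. Qed.

Lemma vieta3 (R : comNzRingType) (a b c : R) :
  ('X - a%:P) * ('X - b%:P) * ('X - c%:P) =
  'X^3 - (a + b + c)%:P * 'X^2 + (a * b + b * c + c * a)%:P * 'X - (a * b * c)%:P.
Proof. by rewrite !polyCD !polyCM; ring. Qed.

Section TribonacciRoots.

Variables (R : comNzRingType) (a b c : R).
Hypothesis tribonacci_factor :
  'X^3 - 'X^2 - 'X - 1 = ('X - a%:P) * ('X - b%:P) * ('X - c%:P).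

Lemma tribonacci_vieta :
  [/\ a + b + c = 1, a * b + b * c + c * a = -1 & a * b * c = 1].
Proof.
have coef i := congr1 (fun p : {poly R} => p`_i)
                      (etrans tribonacci_factor (vieta3 a b c)).
move: (coef 2%N) (coef 1%N) (coef 0%N).
rewrite !coefE /= !(oppr0, sub0r, subr0, add0r, addr0, mulr0, mul0r, mulr1).
by move=> /oppr_inj <- <- /oppr_inj <-.
Qed.

Lemma tribonacci_root_cube (x : R) :
  (x - a) * (x - b) * (x - c) = 0 -> x ^+ 3 = x ^+ 2 + x + 1.
Proof.
have := congr1 (horner^~ x) tribonacci_factor; rewrite /= !hornerE => <- /eqP.
by rewrite subr_eq0 !subr_eq => /eqP ->; ring.
Qed.

Lemma power_sum3_tribonacci (k : nat) : power_sum3 a b c k = (S_seq k)%:R.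
Proof.
have [roots_sum roots_sum2 _] := tribonacci_vieta.
have cube_a : a ^+ 3 = a ^+ 2 + a + 1 by apply: tribonacci_root_cube; ring.
have cube_b : b ^+ 3 = b ^+ 2 + b + 1 by apply: tribonacci_root_cube; ring.
have cube_c : c ^+ 3 = c ^+ 2 + c + 1 by apply: tribonacci_root_cube; ring.
move: k; apply: eq_S_seq.
- by rewrite /power_sum3 !expr0; ring.
- by rewrite /power_sum3 !expr1 roots_sum.
- have -> : power_sum3 a b c 2 = (a + b + c) ^+ 2 - 2 * (a * b + b * c + c * a).
    by rewrite /power_sum3; ring.
  by rewrite roots_sum roots_sum2; ring.
- move=> j; rewrite /power_sum3.
  by rewrite (exprS_of_cube cube_a) (exprS_of_cube cube_b) (exprS_of_cube cube_c); ring.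
Qed.

End TribonacciRoots.

Theorem mainTheorem10 (a b c : algC) :
  'X^3 - 'X^2 - 'X - 1 = ('X - a%:P) * ('X - b%:P) * ('X - c%:P) ->
  forall n : nat, 2 * (S_seq n)%:R = C_seq a b c n ^+ 2 - C_seq a b c (2 * n)%N.
Proof.
move=> factor n.
have [_ _ roots_prod] := tribonacci_vieta factor.
rewrite C_seq_sqr_sub roots_prod expr1n mulr1.
by rewrite (power_sum3_tribonacci factor).
Qed.
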